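(* Let $n\ge2$, $L\ge0$, $k\in\{0,\dots,n-1\}$, and let $p=(\lambda_0,\dots,\lambda_L)$ be a path with $\lambda_0=2\Lambda_0$ and $\lambda_L=\Lambda_k+\Lambda_{L-k}$. Let $x_1<\dots<x_N$ be the positions and $h_1,\dots,h_N$ the heights of the domain walls of $p$, and put $W=x_N$ (the number of nodes in the first row of the associated K-graph) and $h_N$ the height of the last domain wall, with the convention $W=0$, $h_N=h_0=n$ if $N=0$. Then $W-h_N\equiv 2k \pmod n$.
   Context: $\Lambda_0,\dots,\Lambda_{n-1}$ are the fundamental weights of the affine algebra $\widehat{sl(n)}$; indices are extended to all integers modulo $n$ ($\Lambda_i=\Lambda_{i'}$ when $i\equiv i'\pmod n$). For $i\in\mathbb{Z}$ set $\hat{i}=\Lambda_{i+1}-\Lambda_i$ (depending only on $i \bmod n$; the weights $\hat0,\dots,\widehat{n-1}$ are distinct). $P_2^+=\{\Lambda_a+\Lambda_b: 0\le a\le b\le n-1\}$. A path is a sequence $(\lambda_0,\dots,\lambda_L)$ of elements of $P_2^+$ with $\lambda_{\ell+1}-\lambda_\ell\in\{\hat0,\dots,\widehat{n-1}\}$. For a path with $\lambda_0=2\Lambda_0$, $\lambda_L=\Lambda_k+\Lambda_{L-k}$, set $\lambda_{L+1}=\Lambda_k+\Lambda_{L-k+1}$ and define $\mu_\ell\in\{0,\dots,n-1\}$ ($0\le\ell\le L$) by $\widehat{\mu_\ell}=\lambda_{\ell+1}-\lambda_\ell$. There is a domain wall at position $\ell\in\{1,\dots,L\}$ of height $h\in\{1,\dots,n-1\}$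 if $\mu_\ell-\mu_{\ell-1}\equiv h+1\pmod n$. *)

From HB Require Import structures.
From mathcomp Require Import all_boot all_order all_algebra.
Unset Implicit Arguments. Unset Printing Implicit Defensive.
Import Order.TTheory GRing.Theory Num.Theory.
Local Open Scope ring_scope.

(* Weights in the span of the fundamental weights Lambda_0..Lambda_{n-1} of
   affine sl(n), which are linearly independent: a weight is recorded by its
   coefficient vector over 'I_n. *)
Definition weight (n : nat) := {ffun 'I_n -> int}.

Definition Lam (n : nat) (i : int) : weight n :=
  [ffun j : 'I_n => if ((j : nat)%:Z == (i %% n%:Z)%Z) then 1 else 0].

Definition hat (n : nat) (i : int) : weight n := Lam n (i + 1) - Lam n i.

Definition inP2 (n : nat) (lam : weight n) : Prop :=
  exists a b : 'I_n, (a <= b)%N /\ lam = Lam n a + Lam n b.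

Definition is_path (n L : nat) (lam : nat -> weight n) : Prop :=
  (forall l, (l <= L)%N -> inP2 n (lam l)) /\
  (forall l, (l < L)%N -> exists i : 'I_n, lam l.+1 - lam l = hat n i).

Definition ext_path (n L k : nat) (lam : nat -> weight n) (l : nat) : weight n :=
  if l == L.+1 then Lam n k%:Z + Lam n (L%:Z - k%:Z + 1) else lam l.

Definition is_mu (n L k : nat) (lam : nat -> weight n) (mu : nat -> 'I_n) : Prop :=
  forall l, (l <= L)%N ->
    hat n (mu l : nat)%:Z = ext_path n L k lam l.+1 - ext_path n L k lam l.

Definition is_wall (n L : nat) (mu : nat -> 'I_n) (l h : nat) : Prop :=
  [/\ (1 <= l <= L)%N, (1 <= h <= n.-1)%N &
      ((mu l : nat)%:Z - (mu l.-1 : nat)%:Z = h.+1%:Z %[mod n%:Z])%Z].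

Definition last_wall (n L : nat) (mu : nat -> 'I_n) (W hN : nat) : Prop :=
  (is_wall n L mu W hN /\ forall l h, is_wall n L mu l h -> (l <= W)%N)
  \/ ((forall l h, ~ is_wall n L mu l h) /\ W = 0%N /\ hN = n).

From HB Require Import structures.
From mathcomp Require Import all_boot all_order all_algebra zify ring.
Import Order.TTheory GRing.Theory Num.Theory.
Local Open Scope ring_scope.

(* A step l is a domain wall exactly when mu_l <> mu_(l-1) + 1 (mod n).  After
   the last wall W (after 0 if there is none) the mu_l thus run through
   consecutive residues, so the steps hat(mu_l) telescope up to
   lambda_(L+1) = Lambda_k + Lambda_(L-k+1); since the final step is
   hat(L-k), this gives mu_W = W - k and lambda_W = Lambda_k + Lambda_(mu_W).
   Undoing the wall step hat(mu_(W-1)) must leave lambda_(W-1) with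
   nonnegative coefficients, which forces k = mu_(W-1) + 1, and the wall
   condition mu_W - mu_(W-1) = h_N + 1 turns this into W - h_N = 2k.  Without
   walls, lambda_0 = 2 Lambda_0 = Lambda_k + Lambda_(mu_0) forces k = 0. *)

Lemma eqz_modP (d a b : int) : reflect (a = b %[mod d])%Z (d %| a - b)%Z.
Proof. by rewrite -eqz_mod_dvd; exact: eqP. Qed.

Section Weights.

Context {n : nat}.
Local Notation Lam := (Lam n).
Local Notation hat := (hat n).

Lemma Lam_mod {i i' : int} : (i = i' %[mod n])%Z -> Lam i = Lam i'.
Proof. by move=> eq_i; apply/ffunP => j; rewrite !ffunE eq_i. Qed.

Lemma hat_mod {i i' : int} : (i = i' %[mod n])%Z -> hat i = hat i'.
Proof.
move=> eq_i.
have eq_iS : (i + 1 = i' + 1 %[mod n])%Z by rewrite -modzDml eq_i modzDml.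
by rewrite /hat (Lam_mod eq_i) (Lam_mod eq_iS).
Qed.

Lemma telescope_hat (w : nat -> weight n) (a : int) (s d : nat) :
  (forall l, (l < d)%N -> w (s + l).+1 = w (s + l) + hat (a + l%:Z)) ->
  w (s + d)%N + Lam a = w s + Lam (a + d%:Z).
Proof.
elim: d => [|d IHd] wS; first by rewrite addn0 addr0.
rewrite addnS wS // addrAC IHd => [|l ltld]; last by rewrite wS // ltnW.
have -> : a + d.+1%:Z = a + d%:Z + 1 by ring.
by rewrite /hat -addrA subrKC.
Qed.

Lemma mod_progression (m : nat -> int) (s d : nat) :
  (forall l, (l < d)%N -> (m (s + l).+1 = m (s + l) + 1 %[mod n])%Z) ->
  forall l, (l <= d)%N -> (m (s + l)%N = m s + l%:Z %[mod n])%Z.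
Proof.
move=> mS; elim=> [|l IHl] le_ld; first by rewrite addn0 addr0.
have -> : m s + l.+1%:Z = m s + l%:Z + 1 by ring.
by rewrite addnS mS // -modzDml IHl ?modzDml // ltnW.
Qed.

Lemma Lam_ge0 (i : int) (j : 'I_n) : 0 <= Lam i j.
Proof. by rewrite ffunE; case: ifP. Qed.

Hypothesis n_gt1 : (1 < n)%N.

Lemma exists_residue (i : int) : exists j : 'I_n, j%:Z = (i %% n)%Z.
Proof.
have n_gt0 : (0 < n)%N by exact: ltnW.
have le0i : 0 <= (i %% n)%Z by apply: modz_ge0; rewrite eqz_nat -lt0n.
have ltin : (`|(i %% n)%Z| < n)%N by rewrite -ltz_nat gez0_abs // ltz_pmod.
by exists (Ordinal ltin); rewrite /= gez0_abs.
Qed.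

Lemma eqz_mod_add1 (i : int) : (i + 1 == i %[mod n])%Z = false.
Proof.
rewrite -[X in (_ == X %[mod n])%Z]addr0 eqz_modDl modz_small ?modz_small //;
  by rewrite ltz_nat ?(ltnW n_gt1).
Qed.

Lemma hat_inj (a b : int) : hat a = hat b -> (a = b %[mod n])%Z.
Proof.
have [j j_a1] := exists_residue (a + 1).
move/ffunP/(_ j); rewrite !ffunE j_a1 eqxx eqz_mod_add1 eqz_modDr.
by case: eqP => // _; case: ifP.
Qed.

Lemma Lam3_sub_ge0 (a b c x : int) :
  (forall j, 0 <= (Lam a + Lam b + Lam c - Lam x) j) ->
  [|| (x == a %[mod n])%Z, (x == b %[mod n])%Z | (x == c %[mod n])%Z].
Proof.
have [j j_x] := exists_residue x.
move/(_ j); rewrite !ffunE j_x eqxx.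
by do 3!case: ifP.
Qed.

Lemma Lam_double_eq (a b c : int) :
  Lam a + Lam a = Lam b + Lam c -> (a = b %[mod n])%Z.
Proof.
have [j j_a] := exists_residue a.
move/ffunP/(_ j); rewrite !ffunE j_a eqxx.
by case: eqP => // _; case: ifP.
Qed.

End Weights.

Section DomainWalls.

Context {n L k : nat} {lam : nat -> weight n} {mu : nat -> 'I_n}.
Hypotheses (n_gt1 : (1 < n)%N) (muP : is_mu n L k lam mu)
  (lamL : lam L = Lam n k%:Z + Lam n (L%:Z - k%:Z)).

Local Notation e := (ext_path n L k lam).
Local Notation mz l := ((mu l : nat)%:Z).

Lemma ext_path_le l : (l <= L)%N -> e l = lam l.
Proof. by move=> le_lL; rewrite /ext_path ltn_eqF. Qed.

Lemma ext_path_last : e L.+1 = Lam n k%:Z + Lam n (L%:Z - k%:Z + 1).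
Proof. by rewrite /ext_path eqxx. Qed.

Lemma ext_pathS l : (l <= L)%N -> e l.+1 = e l + hat n (mz l).
Proof. by move=> le_lL; rewrite (muP l le_lL) addrC subrK. Qed.

Lemma mu_last : (mz L = L%:Z - k%:Z %[mod n])%Z.
Proof.
apply: (hat_inj n_gt1).
rewrite (muP L (leqnn L)) ext_path_last ext_path_le // lamL.
by rewrite opprD addrACA subrr add0r.
Qed.

Lemma wall_not_succ l h :
  is_wall n L mu l h -> ~ (mz l = mz l.-1 + 1 %[mod n])%Z.
Proof.
case=> _ /andP [h_gt0 le_h] /eqz_modP wall_h /eqz_modP succ_l.
have : (n%:Z %| h%:Z)%Z.
  have -> : h%:Z = (mz l - (mz l.-1 + 1)) - (mz l - mz l.-1 - h.+1%:Z) by ring.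
  by rewrite rpredB.
rewrite dvdzE /= => /(dvdn_leq h_gt0).
by rewrite leqNgt (leq_ltn_trans le_h) // prednK // ltnW.
Qed.

Lemma no_wall_succ l : (1 <= l <= L)%N ->
  (forall h, ~ is_wall n L mu l h) -> (mz l = mz l.-1 + 1 %[mod n])%Z.
Proof.
move=> l_range no_wall.
have n_neq0 : n%:Z != 0 by rewrite eqz_nat -lt0n ltnW.
set r := ((mz l - mz l.-1 - 1) %% n)%Z.
have r_ge0 : 0 <= r by exact: modz_ge0.
have r_lt_n : r < n%:Z by rewrite ltz_pmod // ltz_nat ltnW.
have [r0|r_neq0] := eqVneq r 0.
  by apply/eqz_modP; rewrite opprD addrA; exact/dvdz_mod0P.
case: (no_wall `|r|%N); split => //.
  by apply/andP; split; lia.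
have -> : (`|r|.+1)%:Z = r + 1 by rewrite intS gez0_abs // addrC.
by rewrite /r modzDml subrK.
Qed.

Lemma wall_free_tail s : (s <= L)%N ->
    (forall l h, is_wall n L mu l h -> (l <= s)%N) ->
  (mz s = s%:Z - k%:Z %[mod n])%Z /\ e s = Lam n k%:Z + Lam n (mz s).
Proof.
move=> le_sL walls_le_s.
have mu_succ l : (l < L - s)%N -> (mz (s + l).+1 = mz (s + l) + 1 %[mod n])%Z.
  move=> lt_l; apply: no_wall_succ => [|h /walls_le_s]; first by lia.
  by rewrite ltnNge leq_addr.
have mu_prog := mod_progression (fun l => mz l) s (L - s) mu_succ.
have mu_s : (mz s = s%:Z - k%:Z %[mod n])%Z.
  have := mu_prog _ (leqnn _); rewrite subnKC // mu_last -subzn // => mu_L.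
  have -> : s%:Z - k%:Z = (L%:Z - k%:Z) - (L%:Z - s%:Z) by ring.
  by rewrite -modzDml mu_L modzDml addrK.
split=> //.
have tele :
    e (s + (L.+1 - s)) + Lam n (mz s) = e s + Lam n (mz s + (L.+1 - s)%N%:Z).
  apply: telescope_hat => l lt_l.
  rewrite ext_pathS; last by lia.
  by rewrite (hat_mod (mu_prog l _)) //; lia.
have mu_end : Lam n (mz s + (L.+1 - s)%N%:Z) = Lam n (L%:Z - k%:Z + 1).
  apply: Lam_mod; rewrite -subzn ?(leqW le_sL) //.
  have -> : L%:Z - k%:Z + 1 = (s%:Z - k%:Z) + (L.+1%:Z - s%:Z) by ring.
  by rewrite -modzDml mu_s modzDml.
rewrite subnKC ?(leqW le_sL) // ext_path_last mu_end in tele.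
by apply: (addIr (Lam n (L%:Z - k%:Z + 1))); rewrite -tele addrAC.
Qed.

Lemma last_wall_mod W h : is_path n L lam ->
    is_wall n L mu W h -> (forall l h', is_wall n L mu l h' -> (l <= W)%N) ->
  (W%:Z - h%:Z = 2%:Z * k%:Z %[mod n])%Z.
Proof.
move=> [in_P2 _] wall_W last_W; have [/andP [W_gt0 le_WL] _ height_W] := wall_W.
have [mu_W e_W] := wall_free_tail W le_WL last_W.
have e_W' :
    e W.-1 = Lam n k%:Z + Lam n (mz W) + Lam n (mz W.-1) - Lam n (mz W.-1 + 1).
  rewrite -[e W.-1](addrK (hat n (mz W.-1))) -ext_pathS ?prednK //; last by lia.
  by rewrite e_W /hat opprB addrA.
have e_W'_ge0 j : 0 <= e W.-1 j.
  have le_W'L : (W.-1 <= L)%N := leq_trans (leq_pred W) le_WL.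
  rewrite ext_path_le //; have [a [b [_ ->]]] := in_P2 W.-1 le_W'L.
  by rewrite ffunE addr_ge0 ?Lam_ge0.
move: e_W'_ge0; rewrite e_W' => /(Lam3_sub_ge0 n_gt1).
rewrite eqz_mod_add1 // orbF => /orP [/eqP succ_W' | /eqP succ_W].
  apply/eqz_modP.
  have -> : W%:Z - h%:Z - 2%:Z * k%:Z =
      (mz W - mz W.-1 - h.+1%:Z) - (mz W - (W%:Z - k%:Z))
      + (mz W.-1 + 1 - k%:Z) by ring.
  by apply: rpredD; [apply: rpredB|]; apply/eqz_modP.
by exfalso; apply: (wall_not_succ W h wall_W); rewrite succ_W.
Qed.

Lemma no_wall_k_eq0 : (k < n)%N -> lam 0%N = Lam n 0 + Lam n 0 ->
  (forall l h, ~ is_wall n L mu l h) -> k = 0%N.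
Proof.
move=> lt_kn lam0 no_wall.
have walls_le0 l h : is_wall n L mu l h -> (l <= 0)%N by move/no_wall.
have [_ e_0] := wall_free_tail 0 (leq0n L) walls_le0.
rewrite ext_path_le // lam0 in e_0.
by move/(Lam_double_eq n_gt1): e_0; rewrite modz_nat modn_small // mod0z => -[].
Qed.

End DomainWalls.

Theorem lemma3 (n L k : nat) (lam : nat -> weight n) (mu : nat -> 'I_n)
    (W hN : nat) :
  (2 <= n)%N -> (k < n)%N ->
  is_path n L lam ->
  lam 0%N = Lam n 0 + Lam n 0 ->
  lam L = Lam n k%:Z + Lam n (L%:Z - k%:Z) ->
  is_mu n L k lam mu ->
  last_wall n L mu W hN ->
  (W%:Z - hN%:Z = 2%:Z * k%:Z %[mod n%:Z])%Z.
Proof.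
move=> n_gt1 lt_kn path lam0 lamL muP [[wall_W last_W] | [no_wall [-> ->]]].
  exact: last_wall_mod n_gt1 muP lamL W hN path wall_W last_W.
rewrite (no_wall_k_eq0 n_gt1 muP lamL lt_kn lam0 no_wall) mulr0 sub0r.
by rewrite -modzNm modzz.
Qed.
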